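(* Let $\mu=(p,q,r,s)\in\mathbb{C}^4$. Then: (1) there exists a constant $l=l(\mu)>0$ such that for every $\mu$-Markoff map $\phi\in\Phi_\mu$ the set $\Omega_\phi(l)$ is non-empty; (2) there exists a constant $\alpha=\alpha(\mu)\ge 0$ such that for every $\phi\in\Phi_\mu$ and every $k\ge 2+\alpha$, the set $\Omega_\phi(k)$ is connected, i.e. the union of the regions belonging to $\Omega_\phi(k)$ is a connected subset of the plane.
   Context: Let $\Sigma$ be a countably infinite simplicial tree, properly embedded in the plane, all of whose vertices have degree $3$. A complementary region is the closure of a connected component of the complement of $\Sigma$ in the plane; $\Omega$ denotes the set of complementary regions and $E(\Sigma)$ the set of edges. Every edge $e$ is the intersection of exactly two regions $X,Y$, and its two endpoints lie on two further regions $Z,W$ respectively; we write $e\leftrightarrow(X,Y;Z,W)$. Exactly three regions meet at each vertex. Fix a coloring $\mathcal C:\Omega\cup E(\Sigma)\to\{1,2,3\}$ such that for every $e\leftrightarrow(X,Y;Z,W)$ we have $\mathcal C(e)=\mathcal C(Z)=\mathcal C(W)$ and $\mathcal C(e),\mathcal C(X),\mathcal C(Y)$ pairwise distinct; let $\Omega_i$, $E_i$ be the regions/edges of color $i$. For $\mu=(p,q,r,s)\in\mathbb{C}^4$, a $\mu$-Markoff map is a function $\phi:\Omega\to\mathbb{C}$ such that (i) at every vertex, if $X\in\Omega_1,Y\in\Omega_2,Z\in\Omega_3$ are the three regions meeting there and $x=\phi(X),y=\phi(Y),z=\phi(Z)$, then $x^2+y^2+z^2+xyz=px+qy+rz+s$;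 (ii) for $e\in E_1$ with $e\leftrightarrow(Y,Z;X,X')$: $\phi(X)+\phi(X')=p-\phi(Y)\phi(Z)$; for $e\in E_2$ with $e\leftrightarrow(X,Z;Y,Y')$: $\phi(Y)+\phi(Y')=q-\phi(X)\phi(Z)$; for $e\in E_3$ with $e\leftrightarrow(X,Y;Z,Z')$: $\phi(Z)+\phi(Z')=r-\phi(X)\phi(Y)$. $\Phi_\mu$ denotes the set of $\mu$-Markoff maps. For $k\ge0$, $\Omega_\phi(k)=\{X\in\Omega: |\phi(X)|\le k\}$. *)

From HB Require Import structures.
From mathcomp Require Import all_boot all_order all_algebra.
From mathcomp Require Import reals complex.
Set Implicit Arguments. Unset Strict Implicit. Unset Printing Implicit Defensive.
Import Order.TTheory GRing.Theory Num.Theory.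
Local Open Scope ring_scope.

(* Combinatorial model of the planar trivalent tree Sigma via its dual, the
   Farey graph.  Complementary regions <-> Q u {oo}, encoded as primitive
   integer vectors (a,b) with gcd 1, normalized by b > 0, or (a,b) = (1,0). *)
Definition is_region (v : int * int) : bool :=
  (gcdz v.1 v.2 == 1%N) && ((0 < v.2) || ((v.2 == 0) && (v.1 == 1))).

Record region := Region { rvec :> int * int ; rvecP : is_region rvec }.

(* Two regions share an edge of Sigma iff |ad - bc| = 1 (Farey neighbours). *)
Definition adj (X Y : region) : Prop :=
  `|(X : int * int).1 * (Y : int * int).2 - (X : int * int).2 * (Y : int * int).1| = 1.

(* Vertices of Sigma <-> triples of pairwise adjacent regions.
   An edge e <-> (X,Y) with adj X Y; its two endpoints lie on the two distinct
   regions Z, W adjacent to both X and Y : e <-> (X,Y;Z,W). *)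
Definition edge_quad (X Y Z W : region) : Prop :=
  [/\ adj X Y, adj X Z /\ adj Y Z, adj X W /\ adj Y W & Z <> W].

(* Colours 1,2,3 are represented by 0,1,2 : 'I_3.  The colour of the edge
   e <-> (X,Y;Z,W) is C(Z) (= C(W)). *)
Definition good_coloring (C : region -> 'I_3) : Prop :=
  forall X Y Z W, edge_quad X Y Z W ->
    [/\ C Z = C W, C X <> C Y, C X <> C Z & C Y <> C Z].

Definition mu_coef (K : Type) (p q r : K) (i : 'I_3) : K :=
  if val i == 0%N then p else if val i == 1%N then q else r.

Definition markoff_map (R : realType) (C : region -> 'I_3) (p q r s : R[i])
    (phi : region -> R[i]) : Prop :=
  (forall X Y Z : region, adj X Y -> adj X Z -> adj Y Z ->
     val (C X) = 0%N -> val (C Y) = 1%N -> val (C Z) = 2%N ->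
     phi X ^+ 2 + phi Y ^+ 2 + phi Z ^+ 2 + phi X * phi Y * phi Z
       = p * phi X + q * phi Y + r * phi Z + s) /\
  (forall Y Z X X' : region, edge_quad Y Z X X' ->
     phi X + phi X' = mu_coef p q r (C X) - phi Y * phi Z).

Definition Omega_le (R : realType) (phi : region -> R[i]) (k : R) : region -> Prop :=
  fun X => `|phi X| <= (k%:C)%C.

Fixpoint chain_in (S : region -> Prop) (X : region) (s : seq region) : Prop :=
  if s is Y :: s' then adj X Y /\ S Y /\ chain_in S Y s' else True.

(* The union of a set S of regions is connected in the plane iff any two
   regions of S are joined by a chain of regions of S, consecutive ones
   sharing an edge. *)
Definition regions_connected (S : region -> Prop) : Prop :=
  forall X Y, S X -> S Y ->
    exists s : seq region, chain_in S X s /\ last X s = Y.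

From HB Require Import structures.
From mathcomp Require Import all_boot all_order all_algebra.
From mathcomp Require Import reals complex.
From mathcomp Require Import ring lra zify.
Import Order.TTheory GRing.Theory Num.Theory Normc.
Set Implicit Arguments. Unset Strict Implicit. Unset Printing Implicit Defensive.
Local Open Scope ring_scope.

(* With [nphi w] the modulus of phi at the region of the primitive vector [w],
   the edge and vertex relations give, for an edge with sides x, y and ends
   z, w, and M = |p| + |q| + |r|,
     |z| + |w| >= |x| |y| - M   and   |z| |w| <= |x|^2 + |y|^2 + M (|x| + |y|) + |s|.
   (1) While all moduli exceed l, crossing the edge of a vertex triangle that is
   opposite its largest modulus lowers the sum of the three moduli by at least 1,
   so some modulus drops to l.
   (2) For k >= 2 + M, if the two sides of an edge lie outside Omega(k) and one
   of its ends lies inside, the moduli keep growing along Euclid's algorithm, so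
   the whole Farey cone beyond the edge lies outside Omega(k).  Given A, B in
   Omega(k) that are not adjacent, B lies in such a cone spanned by two
   neighbours X, X + A of A; hence one of them is in Omega(k) and is closer to B,
   measured by |det _ B|. *)

Definition vadd (u v : int * int) : int * int := (u.1 + v.1, u.2 + v.2).
Definition vsub (u v : int * int) : int * int := (u.1 - v.1, u.2 - v.2).
Definition vopp (u : int * int) : int * int := (- u.1, - u.2).
Definition comb (a b : int) (u v : int * int) : int * int :=
  (a * u.1 + b * v.1, a * u.2 + b * v.2).
Definition det (u v : int * int) : int := u.1 * v.2 - u.2 * v.1.
Definition primitive (w : int * int) : Prop := gcdz w.1 w.2 = 1%N.
Definition unimodular (u v : int * int) : Prop := `|det u v| = 1.

Lemma vsubK u v : vadd (vsub u v) v = u.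
Proof. by case: u v => [a b] [c d]; rewrite /vadd /vsub /=; congr pair; ring. Qed.

Lemma vaddK u v : vadd (vadd u v) (vopp v) = u.
Proof. by case: u v => [a b] [c d]; rewrite /vadd /vopp /=; congr pair; ring. Qed.

Lemma vaddKl u v : vadd (vopp u) (vadd u v) = v.
Proof. by case: u v => [a b] [c d]; rewrite /vadd /vopp /=; congr pair; ring. Qed.

Definition normalize (w : int * int) : int * int :=
  if (w.2 < 0) || ((w.2 == 0) && (w.1 < 0)) then vopp w else w.

HB.instance Definition _ := [isSub for rvec].

Definition base_region : region := @Region (1, 0) isT.

(* The region of [w] or [vopp w]; [base_region] when [w] is not primitive. *)
Definition reg (w : int * int) : region := insubd base_region (normalize w).

Lemma primitive_region (X : region) : primitive X.
Proof. by case: X => x /= /andP[/eqP]. Qed.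

Lemma normalize_pm w : normalize w = w \/ normalize w = vopp w.
Proof. by rewrite /normalize; case: ifP; [right | left]. Qed.

Lemma normalize_opp w : normalize (vopp w) = normalize w.
Proof.
case: w => a b; rewrite /normalize /vopp /=.
by do 2 case: ifP => /= ?; congr pair; lia.
Qed.

Lemma normalize_rvec (X : region) : normalize X = X.
Proof.
case: X => [[a b]] /andP[_] /= ab; rewrite /normalize /=.
by case: ifP => // ab'; exfalso; lia.
Qed.

Lemma normalize_region w : primitive w -> is_region (normalize w).
Proof.
case: w => a b; rewrite /primitive /normalize /is_region /vopp /= => g.
have b0 : b = 0 -> `|a| = 1 by move=> E; move: g; rewrite E gcdz0 abszE.
case: ifP => H /=; rewrite ?gcdNz ?gcdzN g eqxx /=.
  by case/orP: H => [|/andP[/eqP b_eq0 ?]]; [|have := b0 b_eq0]; lia.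
case: (ltgtP 0 b) => [//||Hb]; first by move: H; lia.
by have := b0 (esym Hb); move: H; rewrite -Hb eqxx /=; lia.
Qed.

Lemma rvec_reg w : primitive w -> rvec (reg w) = normalize w.
Proof. by move=> pw; rewrite /reg insubdK //; apply: normalize_region. Qed.

Lemma reg_rvec (X : region) : reg X = X.
Proof. by rewrite /reg normalize_rvec valKd. Qed.

Lemma reg_opp w : reg (vopp w) = reg w.
Proof. by rewrite /reg normalize_opp. Qed.

Lemma dvdz_primitive (g : int) w :
  primitive w -> (g %| w.1)%Z -> (g %| w.2)%Z -> `|g| = 1.
Proof.
move=> pw g1 g2; have : (g %| gcdz w.1 w.2)%Z by rewrite dvdz_gcd g1.
by rewrite pw dvdz1 => /eqP; lia.
Qed.

Lemma unimodular_primitive u v : unimodular u v -> primitive u /\ primitive v.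
Proof.
rewrite /unimodular /primitive => uv.
suff dvd1 g : (g %| det u v)%Z -> 0 <= g -> g = 1.
  split; apply: dvd1 => //; apply: rpredB.
  - by apply: dvdz_mulr; apply: dvdz_gcdl.
  - by apply: dvdz_mulr; apply: dvdz_gcdr.
  - by apply: dvdz_mull; apply: dvdz_gcdr.
  - by apply: dvdz_mull; apply: dvdz_gcdl.
move=> + g_ge0; rewrite dvdzE (_ : absz (det u v) = 1%N); last by lia.
by rewrite dvdn1 => /eqP; lia.
Qed.

Lemma det_regl w y : primitive w -> `|det (reg w) y| = `|det w y|.
Proof.
move=> pw; rewrite /det rvec_reg //; case: (normalize_pm w) => -> //.
by rewrite -normrN /vopp /=; congr `|_|; ring.
Qed.

Lemma det_regr w y : primitive w -> `|det y (reg w)| = `|det y w|.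
Proof.
move=> pw; rewrite /det rvec_reg //; case: (normalize_pm w) => -> //.
by rewrite -normrN /vopp /=; congr `|_|; ring.
Qed.

Lemma adj_reg u v : unimodular u v -> adj (reg u) (reg v).
Proof.
move=> uv; have [pu pv] := unimodular_primitive uv.
by rewrite /adj -/(det _ _) det_regl // det_regr.
Qed.

Lemma adj_sym X Y : adj X Y -> adj Y X.
Proof. by rewrite /adj -!/(det _ _) => <-; rewrite -normrN /det; congr `|_|; ring. Qed.

Lemma det_swap u v : det v u = - det u v.
Proof. by rewrite /det; ring. Qed.

Lemma det_addr u v : det u (vadd u v) = det u v.
Proof. by rewrite /det /vadd /=; ring. Qed.

Lemma det_addl u v : det v (vadd u v) = - det u v.
Proof. by rewrite /det /vadd /=; ring. Qed.

Lemma det_subr u v : det u (vsub u v) = - det u v.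
Proof. by rewrite /det /vsub /=; ring. Qed.

Lemma det_subl u v : det v (vsub u v) = - det u v.
Proof. by rewrite /det /vsub /=; ring. Qed.

Lemma unimodular_complement A B : primitive A ->
  exists E t, unimodular A E /\ B = comb t `|det A B| A E.
Proof.
move=> pA; have [x [y]] := Bezoutz A.1 A.2; rewrite pA => xy.
pose E0 := (- y, x); have AE0 : det A E0 = 1 by rewrite /det /=; lia.
have BE0 : B = comb (det B E0) (det A B) A E0.
  case: B => b1 b2; rewrite /comb /det /=.
  by rewrite -[in LHS](mulr1 b1) -[in LHS](mulr1 b2) -AE0 /det /=; congr pair; ring.
have [dB_ge0 | dB_lt0] := ger0P (det A B).
  by exists E0, (det B E0); rewrite /unimodular AE0.
exists (vopp E0), (det B E0); split; rewrite /unimodular.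
  have -> : det A (vopp E0) = - det A E0 by rewrite /det /vopp /=; ring.
  by rewrite normrN AE0.
by rewrite {1}BE0 /comb /=; congr pair; ring.
Qed.

Lemma det_eq0_region (A B : region) : det A B = 0 -> A = B.
Proof.
move=> AB0; have [E [t [AE BE]]] := unimodular_complement B (primitive_region A).
rewrite AB0 normr0 in BE.
have t1 : `|t| = 1.
  apply: (dvdz_primitive (primitive_region B));
  by rewrite BE /comb /= mul0r addr0 dvdz_mulr.
have BA : rvec B = A \/ rvec B = vopp A.
  rewrite BE /comb /vopp !mul0r !addr0.
  have [->|->] : t = 1 \/ t = -1 by lia.
  - by left; rewrite !mul1r; case: (rvec A).
  - by right; rewrite !mulN1r.
apply: val_inj; case: BA => //= BA.
by rewrite -[rvec B]normalize_rvec BA normalize_opp normalize_rvec.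
Qed.

Lemma coprime_comb (a b : nat) u v : primitive (comb a b u v) -> coprime a b.
Proof.
move=> pw; have : `|(gcdn a b)%:Z| = 1.
  by apply: (dvdz_primitive pw); rewrite /comb /=;
    apply: rpredD; apply: dvdz_mulr; rewrite dvdzE ?dvdn_gcdl ?dvdn_gcdr.
by rewrite /coprime => -[->].
Qed.

(* Write B = t A + |det A B| E; the quotient of t by |det A B| gives X and
   the remainder gives b. *)
Lemma farey_cone A B : primitive A -> primitive B -> (2 <= absz (det A B))%N ->
  exists X (a b : nat),
    [/\ unimodular A X, (0 < a)%N, (0 < b)%N & B = comb a b X (vadd X A)].
Proof.
move=> pA pB AB2; have [E [t [AE BE]]] := unimodular_complement B pA.
set D := `|det A B| in BE; have D_gt1 : 1 < D by rewrite /D; lia.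
pose m := (t %/ D)%Z; pose rho := (t %% D)%Z.
have tE : t = m * D + rho by apply: divz_eq.
have rho_ge0 : 0 <= rho by apply: modz_ge0; lia.
have rho_lt : rho < D by apply: ltz_pmod; lia.
pose X := comb m 1 A E.
have BX : B = comb (D - rho) rho X (vadd X A).
  by rewrite BE tE /comb /vadd /=; congr pair; ring.
have rho_neq0 : rho != 0.
  apply/eqP => rho0; move: BX; rewrite rho0 /comb !mul0r !addr0 => BX.
  have : `|D| = 1 by apply: (dvdz_primitive pB); rewrite BX /= dvdz_mulr.
  by lia.
exists X, (absz (D - rho)), (absz rho); split; [|lia|lia|].
- by rewrite /unimodular -AE /X /det /comb /=; congr `|_|; ring.
- by rewrite gez0_abs ?gez0_abs //; lia.
Qed.

Section Inequalities.
Variable F : realFieldType.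
Implicit Types k m x y z w : F.

Lemma edge_ineq_grow k m x y z w : 0 <= m -> 2 + m <= k -> k < x -> k < y ->
  0 <= z -> z <= w -> x * y - m <= w + z -> k < w /\ y <= x * w - m - y.
Proof.
move=> m_ge0 hk hx hy z_ge0 hzw hE.
have h1 : 0 <= (x - (2 + m)) * y by apply: mulr_ge0; lra.
have h2 : 0 <= m * (y - 2) by apply: mulr_ge0; lra.
have h3 : 0 <= (x - 2) * w by apply: mulr_ge0; lra.
split; lra.
Qed.

Lemma edge_ineq_cross k m x y z w : 0 <= m -> 2 + m <= k -> k < x -> k < y ->
  z <= k -> x * y - m <= w + z -> k < w /\ z <= w.
Proof.
move=> m_ge0 hk hx hy hz hE.
have h1 : 0 <= (x - k) * (y - k) by apply: mulr_ge0; lra.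
have h2 : 0 <= (k - (2 + m)) * k by apply: mulr_ge0; lra.
have h3 : 0 <= m * (k - 1) by apply: mulr_ge0; lra.
have h4 : 0 < (x - k) * k by apply: mulr_gt0; lra.
have h5 : 0 <= (y - k) * k by apply: mulr_ge0; lra.
split; lra.
Qed.

Lemma triangle_ineq_drop m S x y z w : 0 <= m -> 0 <= S ->
  6 + 5 * m + 2 * S < x -> x <= y -> y <= z -> 0 <= w ->
  x * y - m <= z + w -> z * w <= x ^+ 2 + y ^+ 2 + m * x + m * y + S ->
  w <= z - 1.
Proof.
move=> m_ge0 S_ge0 hx hxy hyz w_ge0 hE; rewrite !expr2 => hP.
have y_ge1 : 1 <= y by lra.
have a2 : 0 <= (y - x) * (y + x) by apply: mulr_ge0; lra.
have a3 : 0 <= m * (y - x) by apply: mulr_ge0; lra.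
have my_ge0 : 0 <= m * y by apply: mulr_ge0; lra.
have [zw|wz] := lerP z w.
  have a1 : 0 <= y * (2 * w - (x * y - m)) by apply: mulr_ge0; lra.
  have a1' : 0 <= (z - y) * (2 * w) by apply: mulr_ge0; lra.
  have a4 : 0 <= m * y * (y - 1) by apply: mulr_ge0; lra.
  have yy : 0 <= (y - 1) * (y + 1) by apply: mulr_ge0; lra.
  have a5 : 0 <= S * (y * y - 1) by apply: mulr_ge0; lra.
  have a7 : 0 < (x - (4 + 5 * m + 2 * S)) * (y * y).
    by apply: mulr_gt0; [lra | apply: mulr_gt0; lra].
  lra.
suff : w <= y - 1 by lra.
rewrite leNgt; apply/negP => hw.
have b1 : 0 <= (w - (y - 1)) * z by apply: mulr_ge0; lra.
have b2 : 0 <= (y - 1) * (2 * z - (x * y - m)) by apply: mulr_ge0; lra.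
have b3 : 0 <= (y - 1) * ((x - (6 + 5 * m + 2 * S)) * y).
  by apply: mulr_ge0; [lra | apply: mulr_ge0; lra].
have b4 : 0 <= (2 + 5 * m + 2 * S) * ((y - (6 + 5 * m + 2 * S)) * y).
  by apply: mulr_ge0; [lra | apply: mulr_ge0; lra].
have b5 : 0 <= S * (y - 1) by apply: mulr_ge0; lra.
have b8 : 0 <= m * y * (5 + 5 * m + 2 * S) by apply: mulr_ge0; lra.
have b11 : 0 <= (6 + 5 * m + 2 * S) * (y - 1) by apply: mulr_ge0; lra.
have b9 : 0 <= S * ((6 + 5 * m + 2 * S) * y - 1) by apply: mulr_ge0; lra.
lra.
Qed.

End Inequalities.

Lemma normc_ge0 (R : rcfType) (z : R[i]) : 0 <= normc z.
Proof. by case: z => a b; apply: sqrtr_ge0. Qed.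

Lemma normc_subr_le (R : rcfType) (x y : R[i]) : normc (x - y) <= normc x + normc y.
Proof. by rewrite -(normcN y) le_normcD. Qed.

Lemma normcE (R : realType) (z : R[i]) : `|z| = (normc z)%:C%C.
Proof. by case: z. Qed.

Section MarkoffMap.
Variables (R : realType) (C : region -> 'I_3) (p q r s : R[i]).
Hypothesis hC : good_coloring C.
Variable phi : region -> R[i].
Hypothesis hphi : markoff_map C p q r s phi.

Definition alpha_mu := normc p + normc q + normc r.

Lemma Mmu_ge0 : 0 <= alpha_mu.
Proof.
by rewrite /alpha_mu; have := normc_ge0 p; have := normc_ge0 q; have := normc_ge0 r; lra.
Qed.

Lemma normc_mu_coef i : normc (mu_coef p q r i) <= alpha_mu.
Proof.
rewrite /alpha_mu /mu_coef; have := normc_ge0 p; have := normc_ge0 q; have := normc_ge0 r.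
by case: ifP => _; [|case: ifP => _]; lra.
Qed.

Definition nphi w := normc (phi (reg w)).

Lemma nphi_ge0 w : 0 <= nphi w. Proof. exact: normc_ge0. Qed.

Lemma nphi_opp w : nphi (vopp w) = nphi w. Proof. by rewrite /nphi reg_opp. Qed.

Lemma nphi_region (X : region) : nphi X = normc (phi X). Proof. by rewrite /nphi reg_rvec. Qed.

Lemma Omega_leE k (X : region) : Omega_le phi k X <-> normc (phi X) <= k.
Proof. by rewrite /Omega_le normcE lecR. Qed.

Lemma edge_quad_reg u v : unimodular u v ->
  edge_quad (reg u) (reg v) (reg (vadd u v)) (reg (vsub u v)).
Proof.
move=> uv; have [pu pv] := unimodular_primitive uv.
have uw : unimodular u (vadd u v) by rewrite /unimodular det_addr.
have vw : unimodular v (vadd u v) by rewrite /unimodular det_addl normrN.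
have uz : unimodular u (vsub u v) by rewrite /unimodular det_subr normrN.
have vz : unimodular v (vsub u v) by rewrite /unimodular det_subl normrN.
split; [exact: adj_reg | split; exact: adj_reg | split; exact: adj_reg |].
have [_ pw] := unimodular_primitive uw; have [_ pz] := unimodular_primitive uz.
move=> /(congr1 rvec); rewrite !rvec_reg //.
have [u_neq0 v_neq0] : ~ (u.1 = 0 /\ u.2 = 0) /\ ~ (v.1 = 0 /\ v.2 = 0).
  by split => -[E1 E2]; move: uv; rewrite /unimodular /det E1 E2 ?mulr0 ?mul0r subrr.
by case: (normalize_pm (vadd u v)) => ->; case: (normalize_pm (vsub u v)) => ->;
  rewrite /vadd /vsub /vopp => -[]; lia.
Qed.

Lemma nphi_edge u v : unimodular u v ->
  nphi u * nphi v - alpha_mu <= nphi (vadd u v) + nphi (vsub u v).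
Proof.
move=> /edge_quad_reg/hphi.2; have := normc_mu_coef (C (reg (vadd u v))).
rewrite /nphi; set c := mu_coef _ _ _ _.
set z := phi (reg (vadd u v)); set w := phi (reg (vsub u v)) => hc E.
have -> : normc (phi (reg u)) * normc (phi (reg v)) = normc (c - (z + w)).
  by rewrite E opprB addrC subrK normcM.
by have := normc_subr_le c (z + w); have := le_normcD z w; lra.
Qed.

Definition vertex_eq (X Y Z : region) : Prop :=
  phi X ^+ 2 + phi Y ^+ 2 + phi Z ^+ 2 + phi X * phi Y * phi Z =
  mu_coef p q r (C X) * phi X + mu_coef p q r (C Y) * phi Y + mu_coef p q r (C Z) * phi Z + s.

Lemma vertex_eqC12 X Y Z : vertex_eq X Y Z -> vertex_eq Y X Z.
Proof. by move=> E; apply: etrans (etrans _ E) _; ring. Qed.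

Lemma vertex_eqC23 X Y Z : vertex_eq X Y Z -> vertex_eq X Z Y.
Proof. by move=> E; apply: etrans (etrans _ E) _; ring. Qed.

Lemma vertex_eq_rainbow X Y Z : adj X Y -> adj X Z -> adj Y Z ->
  val (C X) = 0%N -> val (C Y) = 1%N -> val (C Z) = 2%N -> vertex_eq X Y Z.
Proof.
by move=> aXY aXZ aYZ cX cY cZ; rewrite /vertex_eq /mu_coef cX cY cZ; apply: hphi.1.
Qed.

Lemma vertex_eq_triangle X Y Z : adj X Y -> adj X Z -> adj Y Z ->
  C X != C Y -> C X != C Z -> C Y != C Z -> vertex_eq X Y Z.
Proof.
move=> aXY aXZ aYZ.
have aYX := adj_sym aXY; have aZX := adj_sym aXZ; have aZY := adj_sym aYZ.
have rb := vertex_eq_rainbow; have C12 := vertex_eqC12; have C23 := vertex_eqC23.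
case eX: (C X) => [[|[|[|?]]] ?] //; case eY: (C Y) => [[|[|[|?]]] ?] //;
  case eZ: (C Z) => [[|[|[|?]]] ?] // _ _ _.
- by apply: rb; rewrite ?eX ?eY ?eZ.
- by apply/C23/rb; rewrite ?eX ?eY ?eZ.
- by apply/C12/rb; rewrite ?eX ?eY ?eZ.
- by apply/C23/C12/rb; rewrite ?eX ?eY ?eZ.
- by apply/C12/C23/rb; rewrite ?eX ?eY ?eZ.
- by apply/C12/C23/C12/rb; rewrite ?eX ?eY ?eZ.
Qed.

(* Vieta: the values at the two ends of an edge are the two roots of the
   vertex equation, viewed as a quadratic in its third variable. *)
Lemma vertex_edge_product u v : unimodular u v ->
  phi (reg (vadd u v)) * phi (reg (vsub u v)) =
  phi (reg u) ^+ 2 + phi (reg v) ^+ 2 - mu_coef p q r (C (reg u)) * phi (reg u)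
   - mu_coef p q r (C (reg v)) * phi (reg v) - s.
Proof.
move=> uv; have quad := edge_quad_reg uv.
have [_ cuv cuw cvw] := hC quad; case: (quad) => auv [auw avw] _ _.
have V := vertex_eq_triangle auv auw avw (introN eqP cuv) (introN eqP cuw) (introN eqP cvw).
have E := hphi.2 _ _ _ _ quad.
have -> : phi (reg (vsub u v)) =
    mu_coef p q r (C (reg (vadd u v))) - phi (reg u) * phi (reg v) - phi (reg (vadd u v)).
  by rewrite -E; ring.
move/eqP: V; rewrite -subr_eq0 => /eqP V.
by apply: subr0_eq; rewrite -oppr0 -V; ring.
Qed.

Lemma nphi_vertex u v : unimodular u v ->
  nphi (vadd u v) * nphi (vsub u v) <=
  nphi u ^+ 2 + nphi v ^+ 2 + alpha_mu * nphi u + alpha_mu * nphi v + normc s.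
Proof.
move=> uv; rewrite /nphi -normcM vertex_edge_product //.
set x := phi (reg u); set y := phi (reg v).
set a := mu_coef p q r _; set b := mu_coef p q r _.
have e1 := normc_subr_le (x ^+ 2 + y ^+ 2 - a * x - b * y) s.
have e2 := normc_subr_le (x ^+ 2 + y ^+ 2 - a * x) (b * y).
have e3 := normc_subr_le (x ^+ 2 + y ^+ 2) (a * x).
have e4 := le_normcD (x ^+ 2) (y ^+ 2).
rewrite !expr2 !normcM in e2 e3 e4 *.
have hax : normc a * normc x <= alpha_mu * normc x.
  by apply: ler_wpM2r; rewrite ?normc_ge0 ?normc_mu_coef.
have hby : normc b * normc y <= alpha_mu * normc y.
  by apply: ler_wpM2r; rewrite ?normc_ge0 ?normc_mu_coef.
lra.
Qed.

Definition escaping k u v :=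
  [/\ unimodular u v, k < nphi u, k < nphi v & nphi (vsub u v) <= nphi (vadd u v)].

Lemma escapingC k u v : escaping k u v -> escaping k v u.
Proof.
rewrite /escaping.
have -> : vsub v u = vopp (vsub u v) by rewrite /vsub /vopp /=; congr pair; ring.
have -> : vadd v u = vadd u v by rewrite /vadd /=; congr pair; ring.
by case=> uv hu hv huv; split; rewrite // ?nphi_opp // /unimodular det_swap normrN.
Qed.

Lemma escapingDr k u v : 2 + alpha_mu <= k -> escaping k u v -> escaping k u (vadd u v).
Proof.
move=> hk [uv hu hv hzw].
have [hw vw] := edge_ineq_grow Mmu_ge0 hk hu hv (nphi_ge0 _) hzw (nphi_edge uv).
have uw : unimodular u (vadd u v) by rewrite /unimodular det_addr.
have E := nphi_edge uw.
have vE : vsub u (vadd u v) = vopp v by rewrite /vsub /vadd /vopp /=; congr pair; ring.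
rewrite vE nphi_opp in E.
by rewrite /escaping vE nphi_opp; split => //; lra.
Qed.

Lemma escapingDl k u v : 2 + alpha_mu <= k -> escaping k u v -> escaping k v (vadd u v).
Proof.
move=> hk /escapingC/(escapingDr hk).
by rewrite (_ : vadd v u = vadd u v) // /vadd /=; congr pair; ring.
Qed.

(* Euclid's algorithm on [(a, b)] walks from the edge [(u, v)] to [comb a b u v]. *)
Lemma escaping_comb k u v (a b : nat) : 2 + alpha_mu <= k -> escaping k u v ->
  (0 < a)%N -> (0 < b)%N -> coprime a b -> k < nphi (comb a b u v).
Proof.
move=> hk; move: {2}(a + b)%N (leqnn (a + b)) => n.
elim: n a b u v => [|n IH] a b u v ab esc a_gt0 b_gt0 cop; first by lia.
have [a_lt_b | b_lt_a | a_eq_b] := ltngtP a b.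
- rewrite (_ : comb a b u v = comb (b - a)%N a v (vadd u v)); last first.
    by rewrite /comb /vadd /= -subzn ?(ltnW a_lt_b) //; congr pair; ring.
  apply: IH; rewrite ?subn_gt0 //; [lia | exact: escapingDl |].
  by rewrite /coprime gcdnC -gcdnDl subnKC ?(ltnW a_lt_b).
- rewrite (_ : comb a b u v = comb (a - b)%N b u (vadd u v)); last first.
    by rewrite /comb /vadd /= -subzn ?(ltnW b_lt_a) //; congr pair; ring.
  apply: IH; rewrite ?subn_gt0 //; [lia | exact: escapingDr |].
  by rewrite /coprime gcdnC -gcdnDl subnKC ?(ltnW b_lt_a) // gcdnC.
- move: cop; rewrite -a_eq_b /coprime gcdnn => /eqP a1; rewrite a1.
  have -> : comb 1 1 u v = vadd u v by rewrite /comb /vadd !mul1r.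
  case: esc => uv hu hv huv.
  by have [] := edge_ineq_grow Mmu_ge0 hk hu hv (nphi_ge0 _) huv (nphi_edge uv).
Qed.

Lemma cone_outside k u v (a b : nat) : 2 + alpha_mu <= k -> unimodular u v ->
  k < nphi u -> k < nphi v -> nphi (vsub u v) <= k ->
  (0 < a)%N -> (0 < b)%N -> coprime a b -> k < nphi (comb a b u v).
Proof.
move=> hk uv hu hv hz; apply: escaping_comb => //; split => //.
by have [] := edge_ineq_cross Mmu_ge0 hk hu hv hz (nphi_edge uv).
Qed.

Lemma Omega_step k (A B : region) : 2 + alpha_mu <= k -> (2 <= absz (det A B))%N ->
  Omega_le phi k A -> Omega_le phi k B ->
  exists2 X : region, adj A X /\ Omega_le phi k X & (absz (det X B) < absz (det A B))%N.
Proof.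
move=> hk AB2 /Omega_leE hA /Omega_leE hB.
have [X [a [b [AX a_gt0 b_gt0 BE]]]] :=
  farey_cone (primitive_region A) (primitive_region B) AB2.
have [nA nX nY] : [/\ absz (det A B) = (a + b)%N, absz (det X B) = b
                    & absz (det (vadd X A) B) = a].
  have e : det A X = 1 \/ det A X = -1 by move: AX; rewrite /unimodular; lia.
  by rewrite BE /det /comb /vadd /=; case: e; rewrite /det => e; split; nia.
have inOmega Z : unimodular A Z -> nphi Z <= k -> (absz (det Z B) < absz (det A B))%N ->
    exists2 X : region, adj A X /\ Omega_le phi k X & (absz (det X B) < absz (det A B))%N.
  move=> AZ hZ ZB; have [_ pZ] := unimodular_primitive AZ.
  exists (reg Z); first by split; [rewrite -[A]reg_rvec; apply: adj_reg | apply/Omega_leE].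
  by have := det_regl B pZ; lia.
have [hX|hX] := lerP (nphi X) k; first by apply: (inOmega X) => //; rewrite nX nA; lia.
have AY : unimodular A (vadd X A) by rewrite /unimodular -AX /det /vadd /=; congr `|_|; ring.
have [hY|hY] := lerP (nphi (vadd X A)) k.
  by apply: (inOmega (vadd X A)) => //; rewrite nY nA; lia.
have XY : unimodular X (vadd X A) by rewrite /unimodular det_addr det_swap normrN.
have hXY : nphi (vsub X (vadd X A)) <= k.
  rewrite (_ : vsub X (vadd X A) = vopp A) ?nphi_opp ?nphi_region //.
  by rewrite /vsub /vadd /vopp /=; congr pair; ring.
have cop : coprime a b.
  by apply: (@coprime_comb _ _ X (vadd X A)); rewrite -BE; apply: primitive_region.
by have := cone_outside hk XY hX hY hXY a_gt0 b_gt0 cop; rewrite -BE nphi_region; lra.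
Qed.

Lemma Omega_connected k : 2 + alpha_mu <= k -> regions_connected (Omega_le phi k).
Proof.
move=> hk A B; move: {2}(absz (det A B)) (leqnn (absz (det A B))) => n.
elim: n A => [|n IH] A AB hA hB.
  by exists [::]; split => //=; apply: det_eq0_region; lia.
have [AB_le1|AB2] := leqP (absz (det A B)) 1.
  have [/det_eq0_region <-|AB0] := eqVneq (det A B) 0; first by exists [::].
  by exists [:: B]; do !split => //; rewrite /adj -/(det _ _); lia.
have [X [aX hX] XB] := Omega_step hk AB2 hA hB.
have [sq [chain lastB]] := IH X ltac:(lia) hX hB.
by exists (X :: sq).
Qed.

Definition l_mu := 6 + 5 * alpha_mu + 2 * normc s.

Lemma Lmu_gt0 : 0 < l_mu.
Proof. by rewrite /l_mu; have := Mmu_ge0; have := normc_ge0 s; lra. Qed.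

Definition triangle_sum u v := nphi u + nphi v + nphi (vadd u v).

Lemma top_vertex_drop u v : unimodular u v -> l_mu < nphi u -> l_mu < nphi v ->
  nphi u <= nphi (vadd u v) -> nphi v <= nphi (vadd u v) ->
  nphi (vsub u v) <= nphi (vadd u v) - 1.
Proof.
move=> uv hu hv huw hvw.
have E := nphi_edge uv; have P := nphi_vertex uv.
have hM := Mmu_ge0; have hS := normc_ge0 s; have hz := nphi_ge0 (vsub u v).
rewrite /l_mu in hu hv.
have [huv|hvu] := lerP (nphi u) (nphi v).
- by apply: (triangle_ineq_drop (y := nphi v) hM hS hu) => //; lra.
- by apply: (triangle_ineq_drop (y := nphi u) hM hS hv) => //; lra.
Qed.

Definition triangle_progress u v :=
  (exists w, nphi w <= l_mu) \/
  exists u' v', unimodular u' v' /\ triangle_sum u' v' <= triangle_sum u v - 1.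

Lemma triangle_progress_top u v : unimodular u v ->
  nphi u <= nphi (vadd u v) -> nphi v <= nphi (vadd u v) -> triangle_progress u v.
Proof.
move=> uv huw hvw.
have [hu|hu] := lerP (nphi u) l_mu; first by left; exists u.
have [hv|hv] := lerP (nphi v) l_mu; first by left; exists v.
right; exists (vsub u v), v; split.
  by rewrite /unimodular -uv /det /vsub /=; congr `|_|; ring.
rewrite /triangle_sum vsubK.
by have := top_vertex_drop uv hu hv huw hvw; lra.
Qed.

(* The triangle [u, v, u + v] is also the triangle of the pairs
   [(u + v, - v)] and [(- u, u + v)], whose sums are [u] and [v]. *)
Lemma triangle_descent u v : unimodular u v -> triangle_progress u v.
Proof.
move=> uv.
have u1 : unimodular (vadd u v) (vopp v).
  by rewrite /unimodular -uv -normrN /det /vadd /vopp /=; congr `|_|; ring.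
have u2 : unimodular (vopp u) (vadd u v).
  by rewrite /unimodular -uv -normrN /det /vadd /vopp /=; congr `|_|; ring.
have umax : nphi v <= nphi u -> nphi (vadd u v) <= nphi u -> triangle_progress u v.
  move=> vu wu; have f1 : triangle_sum (vadd u v) (vopp v) = triangle_sum u v.
    by rewrite /triangle_sum vaddK nphi_opp; ring.
  by rewrite /triangle_progress -f1; apply: triangle_progress_top; rewrite ?vaddK ?nphi_opp.
have vmax : nphi u <= nphi v -> nphi (vadd u v) <= nphi v -> triangle_progress u v.
  move=> uv' wv; have f2 : triangle_sum (vopp u) (vadd u v) = triangle_sum u v.
    by rewrite /triangle_sum vaddKl nphi_opp; ring.
  by rewrite /triangle_progress -f2; apply: triangle_progress_top; rewrite ?vaddKl ?nphi_opp.
have [huw|uw] := lerP (nphi u) (nphi (vadd u v));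
  have [hvw|vw] := lerP (nphi v) (nphi (vadd u v)).
- exact: triangle_progress_top.
- by apply: vmax; lra.
- by apply: umax; lra.
- by have [] := lerP (nphi v) (nphi u) => ?; [apply: umax | apply: vmax]; lra.
Qed.

Lemma exists_small_region : exists X : region, normc (phi X) <= l_mu.
Proof.
have descent n u v : unimodular u v -> triangle_sum u v <= n%:R -> exists w, nphi w <= l_mu.
  elim: n u v => [|n IH] u v uv hn.
    exists u; move: hn; rewrite /triangle_sum; have := Lmu_gt0.
    by have := nphi_ge0 v; have := nphi_ge0 (vadd u v); lra.
  case: (triangle_descent uv) => [//|[u' [v' [uv' h']]]].
  by apply: (IH u' v' uv'); move: hn; rewrite -natr1; lra.
have uv : unimodular (1, 0) (0, 1) by [].
have triangle_sum_ge0 : 0 <= triangle_sum (1, 0) (0, 1).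
  rewrite /triangle_sum; have := nphi_ge0 (1, 0); have := nphi_ge0 (0, 1).
  by have := nphi_ge0 (1, 1); lra.
have [w hw] := descent _ _ _ uv (ltW (archi_boundP triangle_sum_ge0)).
by exists (reg w).
Qed.

End MarkoffMap.

Theorem theorem3p1 (R : realType) (C : region -> 'I_3) (hC : good_coloring C)
    (p q r s : R[i]) :
  (exists l : R, 0 < l /\
     forall phi : region -> R[i], markoff_map C p q r s phi ->
       exists X : region, Omega_le phi l X) /\
  (exists alpha : R, 0 <= alpha /\
     forall phi : region -> R[i], markoff_map C p q r s phi ->
       forall k : R, 2 + alpha <= k -> regions_connected (Omega_le phi k)).
Proof.
split.
- exists (l_mu p q r s); split; first exact: Lmu_gt0.
  move=> phi hphi; have [X hX] := exists_small_region hC hphi.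
  by exists X; apply/Omega_leE.
- exists (alpha_mu p q r); split; first exact: Mmu_ge0.
  by move=> phi hphi k hk; apply: (Omega_connected hphi hk).
Qed.
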